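(* Let $N\ge1$ and let $\{a_n\}_{n=0}^{N-1},\{b_n\}_{n=0}^{N-1},\{c_n\}_{n=1}^{N}$ be real sequences with $c_n>0$, $a_{N-1}=0$, $b_{N-1}=\tfrac12$, $c_N=1$, satisfying for $n=1,\dots,N-1$ $$a_{n-1}=a_n\Big(\frac{1}{c_n^2+1}\Big)^{1/2}+b_n\Big(\frac{1}{c_n^2+1}\Big)^{3/2}c_n^2,\quad b_{n-1}=b_n\Big(\frac{1}{c_n^2+1}\Big)^{3/2}+\frac{c_n}{c_n^2+1},\quad -3b_nc_n+(c_n^2+1)^{1/2}(1-c_n^2)=0.$$ Then for each $n\in\{2,\dots,N\}$, $c_{n-1}$ is the unique root in $(0,1)$ of the equation in $x$ $$\frac{1}{x}(x^2+1)^{1/2}(1-x^2)=\frac{1}{c_n^2+1}\Big(\frac{1}{c_n}+2c_n\Big),$$ $c_N>c_{N-1}>\cdots>c_2>c_1$, and $b_n=\dfrac{(c_n^2+1)^{1/2}}{3c_n}(1-c_n^2)$ for $n=1,\dots,N-1$.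
   Context: These sequences describe the equilibrium of the risk-seeking insider model (Model 3) of an $N$-period Kyle-type insider trading model, in which the insider's trading intensity in period $n$ is $c_n\sigma_u\Delta t_N^{1/2}\Sigma_{n-1}^{-1/2}$; the claim concerns only the sequences as defined here. *)

From Stdlib Require Import Reals.
Open Scope R_scope.

Definition half_pow (c : R) : R := sqrt (1 / (c ^ 2 + 1)).
Definition three_half_pow (c : R) : R := (sqrt (1 / (c ^ 2 + 1))) ^ 3.

Definition root_lhs (x : R) : R := (1 / x) * sqrt (x ^ 2 + 1) * (1 - x ^ 2).
Definition root_rhs (c : R) : R := (1 / (c ^ 2 + 1)) * (1 / c + 2 * c).

(* Writing [s = sqrt (c^2+1)], the third equation says [3 b_n = root_lhs c_n], and
   substituting this into the recurrence for [b_{n-1}] (using [three_half_pow c = 1/s^3])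
   gives [3 b_{n-1} = root_rhs c_n]; at [n = N] the boundary values give the same identity.
   Hence [root_lhs c_{n-1} = root_rhs c_n]. Since [root_lhs x = sqrt (1 + 1/x^2) (1 - x^2)]
   is strictly decreasing on (0, 1], positive exactly on (0, 1), and lies strictly below
   [root_rhs] at every [c > 0], the root is unique, lies in (0, 1), and is smaller than [c_n]. *)

From Stdlib Require Import Reals Lra Lia Psatz.
Open Scope R_scope.

Lemma sqrt_sq_add1_pos (x : R) : 0 < sqrt (x ^ 2 + 1).
Proof. apply sqrt_lt_R0; nra. Qed.

Lemma sqrt_sq_add1_sqr (x : R) : sqrt (x ^ 2 + 1) ^ 2 = x ^ 2 + 1.
Proof. apply pow2_sqrt; nra. Qed.

Lemma root_lhs_div (x : R) : root_lhs x = sqrt (x ^ 2 + 1) / x * (1 - x ^ 2).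
Proof. unfold root_lhs, Rdiv; ring. Qed.

Lemma sqrt_sq_add1_div_decreasing (x y : R) :
  0 < x -> x < y -> sqrt (y ^ 2 + 1) / y < sqrt (x ^ 2 + 1) / x.
Proof.
  intros x_pos x_lt_y.
  assert (sqr_eq : forall z, z <> 0 -> (sqrt (z ^ 2 + 1) / z)² = 1 + / z ^ 2).
  { intros z z_neq0; rewrite Rsqr_pow2; unfold Rdiv.
    rewrite Rpow_mult_distr, sqrt_sq_add1_sqr, pow_inv; field; exact z_neq0. }
  apply Rsqr_incrst_0.
  - rewrite !sqr_eq by lra.
    apply Rplus_lt_compat_l, Rinv_lt_contravar.
    + apply Rmult_lt_0_compat; apply pow_lt; lra.
    + nra.
  - apply Rlt_le, Rdiv_lt_0_compat; [apply sqrt_sq_add1_pos | lra].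
  - apply Rlt_le, Rdiv_lt_0_compat; [apply sqrt_sq_add1_pos | lra].
Qed.

Lemma root_lhs_decreasing (x y : R) :
  0 < x -> x < y -> y <= 1 -> root_lhs y < root_lhs x.
Proof.
  intros x_pos x_lt_y y_le1; rewrite !root_lhs_div.
  apply Rmult_le_0_lt_compat; [| nra | | nra].
  - apply Rlt_le, Rdiv_lt_0_compat; [apply sqrt_sq_add1_pos | lra].
  - exact (sqrt_sq_add1_div_decreasing x y x_pos x_lt_y).
Qed.

Lemma root_lhs_inj (x y : R) :
  0 < x < 1 -> 0 < y < 1 -> root_lhs x = root_lhs y -> x = y.
Proof.
  intros x_range y_range eq_lhs.
  destruct (Rtotal_order x y) as [x_lt_y | [x_eq_y | y_lt_x]]; [| exact x_eq_y |].
  - pose proof (root_lhs_decreasing x y ltac:(lra) x_lt_y ltac:(lra)); lra.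
  - pose proof (root_lhs_decreasing y x ltac:(lra) y_lt_x ltac:(lra)); lra.
Qed.

Lemma root_lhs_pos_lt1 (x : R) : 0 < x -> 0 < root_lhs x -> x < 1.
Proof.
  intros x_pos lhs_pos; rewrite root_lhs_div in lhs_pos.
  assert (factor_pos : 0 < sqrt (x ^ 2 + 1) / x)
    by (apply Rdiv_lt_0_compat; [apply sqrt_sq_add1_pos | lra]).
  destruct (Rlt_or_le x 1) as [x_lt1 | x_ge1]; [exact x_lt1 |].
  assert ((1 - x ^ 2) <= 0) by nra.
  nra.
Qed.

Lemma root_rhs_pos (c : R) : 0 < c -> 0 < root_rhs c.
Proof.
  intros c_pos; unfold root_rhs.
  apply Rmult_lt_0_compat; [apply Rdiv_lt_0_compat; nra |].
  assert (0 < 1 / c) by (apply Rdiv_lt_0_compat; lra).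
  lra.
Qed.

Lemma root_lhs_lt_rhs (c : R) : 0 < c -> root_lhs c < root_rhs c.
Proof.
  intros c_pos.
  apply (Rmult_lt_reg_r c); [exact c_pos |].
  apply Rlt_trans with 1.
  - replace (root_lhs c * c) with (sqrt (c ^ 2 + 1) * (1 - c ^ 2))
      by (unfold root_lhs; field; lra).
    (* [s <= s^2 = c^2 + 1] because [s >= 1], so [s (1 - c^2) <= 1 - c^4] when [c < 1] *)
    pose proof (sqrt_sq_add1_sqr c); pose proof (sqrt_sq_add1_pos c).
    assert (sqrt (c ^ 2 + 1) <= c ^ 2 + 1) by nra.
    nra.
  - replace (root_rhs c * c) with (1 + c ^ 2 / (c ^ 2 + 1))
      by (unfold root_rhs; field; split; nra).
    assert (0 < c ^ 2 / (c ^ 2 + 1)) by (apply Rdiv_lt_0_compat; nra).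
    lra.
Qed.

Lemma three_half_pow_inv (c : R) : three_half_pow c = / sqrt (c ^ 2 + 1) ^ 3.
Proof.
  unfold three_half_pow.
  rewrite sqrt_div_alt by nra.
  rewrite sqrt_1, <- pow_inv; unfold Rdiv; rewrite Rmult_1_l; reflexivity.
Qed.

Lemma root_lhs_eq_three_b (b c : R) :
  0 < c -> - 3 * b * c + sqrt (c ^ 2 + 1) * (1 - c ^ 2) = 0 -> root_lhs c = 3 * b.
Proof.
  intros c_pos b_c_rel; unfold root_lhs.
  replace (3 * b) with (3 * b * c / c) by (field; lra).
  replace (3 * b * c) with (sqrt (c ^ 2 + 1) * (1 - c ^ 2)) by lra.
  field; lra.
Qed.

Lemma b_step_eq_root_rhs (b c : R) :
  0 < c -> - 3 * b * c + sqrt (c ^ 2 + 1) * (1 - c ^ 2) = 0 ->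
  3 * (b * three_half_pow c + c / (c ^ 2 + 1)) = root_rhs c.
Proof.
  intros c_pos b_c_rel.
  assert (three_b : 3 * b = sqrt (c ^ 2 + 1) * (1 - c ^ 2) / c)
    by (rewrite <- (root_lhs_eq_three_b b c c_pos b_c_rel); unfold root_lhs; field; lra).
  replace (3 * (b * three_half_pow c + c / (c ^ 2 + 1)))
    with (3 * b * three_half_pow c + 3 * c / (c ^ 2 + 1)) by (field; nra).
  rewrite three_b, three_half_pow_inv; unfold root_rhs.
  pose proof (sqrt_sq_add1_pos c) as s_pos; pose proof (sqrt_sq_add1_sqr c) as s_sqr.
  set (s := sqrt (c ^ 2 + 1)) in *.
  rewrite <- s_sqr.
  field; lra.
Qed.

Section Equilibrium.

Variables (N : nat) (b c : nat -> R).

Hypothesis c_pos : forall n, (1 <= n <= N)%nat -> 0 < c n.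
Hypothesis b_last : b (N - 1)%nat = 1 / 2.
Hypothesis c_last : c N = 1.
Hypothesis b_step : forall n, (1 <= n <= N - 1)%nat ->
  b (n - 1)%nat = b n * three_half_pow (c n) + c n / (c n ^ 2 + 1).
Hypothesis b_c_rel : forall n, (1 <= n <= N - 1)%nat ->
  - 3 * b n * c n + sqrt (c n ^ 2 + 1) * (1 - c n ^ 2) = 0.

Lemma b_closed_form n : (1 <= n <= N - 1)%nat ->
  b n = sqrt (c n ^ 2 + 1) / (3 * c n) * (1 - c n ^ 2).
Proof.
  intros n_range.
  assert (c_n_pos : 0 < c n) by (apply c_pos; lia).
  pose proof (root_lhs_eq_three_b (b n) (c n) c_n_pos (b_c_rel n n_range)) as lhs_eq.
  unfold root_lhs in lhs_eq.
  replace (b n) with (3 * b n / 3) by field.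
  rewrite <- lhs_eq; field; lra.
Qed.

Lemma root_lhs_prev_eq_rhs n : (2 <= n <= N)%nat ->
  root_lhs (c (n - 1)%nat) = root_rhs (c n).
Proof.
  intros n_range.
  rewrite (root_lhs_eq_three_b (b (n - 1)%nat)) by (apply c_pos || apply b_c_rel; lia).
  destruct (Nat.eq_dec n N) as [-> | n_neq_N].
  - rewrite b_last, c_last; unfold root_rhs; field.
  - rewrite b_step by lia.
    apply b_step_eq_root_rhs; [apply c_pos | apply b_c_rel]; lia.
Qed.

Lemma c_prev_range n : (2 <= n <= N)%nat -> 0 < c (n - 1)%nat < 1.
Proof.
  intros n_range.
  assert (c_prev_pos : 0 < c (n - 1)%nat) by (apply c_pos; lia).
  split; [exact c_prev_pos |].
  apply root_lhs_pos_lt1; [exact c_prev_pos |].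
  rewrite root_lhs_prev_eq_rhs by exact n_range.
  apply root_rhs_pos, c_pos; lia.
Qed.

Lemma c_prev_lt n : (2 <= n <= N)%nat -> c (n - 1)%nat < c n.
Proof.
  intros n_range.
  destruct (c_prev_range n n_range) as [_ c_prev_lt1].
  destruct (Rlt_or_le (c (n - 1)%nat) (c n)) as [lt | c_n_le]; [exact lt |].
  assert (lhs_le : root_lhs (c (n - 1)%nat) <= root_lhs (c n)).
  { destruct (Rle_lt_or_eq_dec _ _ c_n_le) as [c_n_lt | ->]; [| apply Rle_refl].
    apply Rlt_le, root_lhs_decreasing; [apply c_pos; lia | exact c_n_lt | lra]. }
  rewrite root_lhs_prev_eq_rhs in lhs_le by exact n_range.
  pose proof (root_lhs_lt_rhs (c n) ltac:(apply c_pos; lia)).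
  lra.
Qed.

End Equilibrium.

Theorem proposition5 (N : nat) (a b c : nat -> R) :
  (1 <= N)%nat ->
  (forall n : nat, (1 <= n <= N)%nat -> 0 < c n) ->
  a (N - 1)%nat = 0 ->
  b (N - 1)%nat = 1 / 2 ->
  c N = 1 ->
  (forall n : nat, (1 <= n <= N - 1)%nat ->
     a (n - 1)%nat = a n * half_pow (c n) + b n * three_half_pow (c n) * (c n) ^ 2 /\
     b (n - 1)%nat = b n * three_half_pow (c n) + c n / ((c n) ^ 2 + 1) /\
     - 3 * b n * c n + sqrt ((c n) ^ 2 + 1) * (1 - (c n) ^ 2) = 0) ->
  (forall n : nat, (2 <= n <= N)%nat ->
     (0 < c (n - 1)%nat < 1 /\
      root_lhs (c (n - 1)%nat) = root_rhs (c n) /\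
      (forall x : R, 0 < x < 1 -> root_lhs x = root_rhs (c n) -> x = c (n - 1)%nat))) /\
  (forall n : nat, (2 <= n <= N)%nat -> c (n - 1)%nat < c n) /\
  (forall n : nat, (1 <= n <= N - 1)%nat ->
     b n = sqrt ((c n) ^ 2 + 1) / (3 * c n) * (1 - (c n) ^ 2)).
Proof.
  intros _ c_pos _ b_last c_last recursion.
  pose proof (fun n n_range => proj1 (proj2 (recursion n n_range))) as b_step.
  pose proof (fun n n_range => proj2 (proj2 (recursion n n_range))) as b_c_rel.
  pose proof (root_lhs_prev_eq_rhs N b c c_pos b_last c_last b_step b_c_rel) as root_eq.
  pose proof (c_prev_range N b c c_pos b_last c_last b_step b_c_rel) as c_range.
  split; [| split].
  - intros n n_range; split; [exact (c_range n n_range) |].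
    split; [exact (root_eq n n_range) |].
    intros x x_range x_root.
    apply root_lhs_inj; [exact x_range | exact (c_range n n_range) |].
    rewrite x_root; symmetry; exact (root_eq n n_range).
  - exact (c_prev_lt N b c c_pos b_last c_last b_step b_c_rel).
  - exact (b_closed_form N b c c_pos b_c_rel).
Qed.
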